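(* Let $k\ge4$, let $d_{\mathrm{ubd}}(k)=2^{k-1}k\log2$, and let $d_{\mathrm{lbd}}(4)=16.7$, $d_{\mathrm{lbd}}(k)=(2^{k-1}-2)k\log2$ for $k\ge5$. For $d\in[d_{\mathrm{lbd}}(k),d_{\mathrm{ubd}}(k)]$ let $x(k,d)$ be the unique solution of $\Psi_d(x)=x$ in $[\frac12-\frac1{2^k},\frac12]$ and $\Phi^\star(d)=\Phi_k(d,x(k,d))$. Then $d\mapsto\Phi^\star(d)$ is continuous on $[d_{\mathrm{lbd}}(k),d_{\mathrm{ubd}}(k)]$, $\Phi^\star(d_{\mathrm{lbd}}(k))>0$ and $\Phi^\star(d_{\mathrm{ubd}}(k))<0$.
   Context: $\hat\Psi(x)=\frac{1-2x^{k-1}}{1-x^{k-1}}$, $\dot\Psi(v)=\frac{1-v^{d-1}}{2-v^{d-1}}$, $\Psi_d=\dot\Psi\circ\hat\Psi$; $\Phi_k(d,x)=-\log(1-x)-d(1-k^{-1}-d^{-1})\log(1-2x^k)+(d-1)\log(1-x^{k-1})$. (Existence and uniqueness of $x(k,d)$ in this range is known.) *)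

From Stdlib Require Import Reals ClassicalEpsilon.
Open Scope R_scope.

Definition hatPsi (k : nat) (x : R) : R :=
  (1 - 2 * x ^ (k - 1)) / (1 - x ^ (k - 1)).

(* dotPsi(v) = (1 - v^(d-1)) / (2 - v^(d-1)), real exponent d-1 (v > 0 in range) *)
Definition dotPsi (d : R) (v : R) : R :=
  (1 - Rpower v (d - 1)) / (2 - Rpower v (d - 1)).

Definition Psi (k : nat) (d : R) (x : R) : R := dotPsi d (hatPsi k x).

Definition Phi (k : nat) (d x : R) : R :=
  - ln (1 - x) - d * (1 - / INR k - / d) * ln (1 - 2 * x ^ k)
  + (d - 1) * ln (1 - x ^ (k - 1)).

Definition d_ubd (k : nat) : R := 2 ^ (k - 1) * INR k * ln 2.
Definition d_lbd (k : nat) : R :=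
  if Nat.eqb k 4 then 16.7 else (2 ^ (k - 1) - 2) * INR k * ln 2.

Definition fp_spec (k : nat) (d x : R) : Prop :=
  1/2 - 1 / 2 ^ k <= x <= 1/2 /\ Psi k d x = x.

(* x(k,d): the (known to be unique) solution of Psi_d(x) = x in the interval,
   selected by Hilbert's epsilon. *)
Definition xkd (k : nat) (d : R) : R := epsilon (inhabits 0) (fp_spec k d).

Definition Phistar (k : nat) (d : R) : R := Phi k d (xkd k d).

Definition continuous_on_closed (f : R -> R) (a b : R) : Prop :=
  forall d0, a <= d0 <= b ->
    forall eps, 0 < eps -> exists delta, 0 < delta /\
      forall d, a <= d <= b -> Rabs (d - d0) < delta -> Rabs (f d - f d0) < eps.

(* Write [w = hatPsi x ^ (d-1)]: the fixed-point equation [Psi_d x = x] is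
   [fp_gap d x := w - (1 - 2x)/(1 - x) = 0].  For [d] in [[d_lbd k, d_ubd k]], [fp_gap d] is
   convex on [[1/2 - 2^-k, 1/2]] (its derivative increases as soon as [x^(k-1) (d - 4) >= 1]),
   negative at the left end and positive at [1/2]; so it has a single root [x(k,d)] there,
   and since [fp_gap] is continuous in [d] this root, hence [Phistar], depends continuously
   on [d].  For the signs it suffices to find [x1] left of the root ([fp_gap d x1 < 0]) with
   [Phi(d, .)] increasing on [[x1, 1/2]]: then [Phi(d, x1) <= Phistar d <= Phi(d, 1/2)].
   At [d_lbd], [Phi(d, x1) > 0]; at [d_ubd], [Phi(d, 1/2) = ln 2 + 2^(k-1) ln 2 ln (1 - 2^(1-k))]
   is negative.  The inequalities are checked on a few subintervals for [k = 4, 5], and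
   asymptotically for [k >= 6], where [x1 = (1 - 2^-k)/2] and [2^k >= 16 k^2 / 9]. *)

From Stdlib Require Import Reals Lra Lia ClassicalEpsilon.
From Coquelicot Require Import Coquelicot.
Open Scope R_scope.

(** * Elementary real analysis *)

Lemma continuity_pt_of_ex_derive f x : ex_derive f x -> continuity_pt f x.
Proof.
  intros H. apply continuity_pt_filterlim.
  apply (@ex_derive_continuous R_AbsRing R_NormedModule). exact H.
Qed.

Lemma MVT_is_derive f df a b : a <= b ->
  (forall x, a <= x <= b -> is_derive f x (df x)) ->
  exists c, a <= c <= b /\ f b - f a = df c * (b - a).
Proof.
  intros Hab Hd. destruct (Rle_lt_or_eq_dec a b Hab) as [Hlt | <-].
  - destruct (MVT_cor3 f df a b Hlt) as (c & Hac & Hcb & E).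
    + intros x Hax Hxb. apply is_derive_Reals, Hd. lra.
    + exists c. split; lra.
  - exists a. split; [lra | ring].
Qed.

Lemma incr_of_deriv_nonneg f df a b : a <= b ->
  (forall x, a <= x <= b -> is_derive f x (df x)) ->
  (forall x, a <= x <= b -> 0 <= df x) -> f a <= f b.
Proof.
  intros Hab Hd Hpos. destruct (MVT_is_derive f df a b Hab Hd) as (c & Hc & E).
  assert (0 <= df c * (b - a)) by (apply Rmult_le_pos; [apply Hpos | ]; lra).
  lra.
Qed.

Lemma ln_1p_le t : -1 < t -> ln (1 + t) <= t.
Proof.
  intros Ht. pose proof (exp_ineq1_le (ln (1 + t))) as H.
  rewrite exp_ln in H by lra. lra.
Qed.

Lemma ln_1m_upper z : 0 <= z < 1 -> ln (1 - z) <= - z - z^2/2.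
Proof.
  intros Hz.
  set (f t := - t - t^2/2 - ln (1 - t)).
  assert (f 0 <= f z).
  { apply (incr_of_deriv_nonneg f (fun t => t^2/(1-t))); try lra.
    - intros t Ht. unfold f. auto_derive; [lra | field; lra].
    - intros t Ht. apply Rdiv_le_0_compat; nra. }
  unfold f in H. rewrite Rminus_0_r, ln_1 in H. lra.
Qed.

Lemma ln_1m_lower z : 0 <= z <= 1/2 -> - z - z^2/2 - 2/3*z^3 <= ln (1 - z).
Proof.
  intros Hz.
  set (f t := ln (1 - t) + t + t^2/2 + 2/3*t^3).
  assert (f 0 <= f z).
  { apply (incr_of_deriv_nonneg f (fun t => (t^2 - 2*t^3)/(1-t))); try lra.
    - intros t Ht. unfold f. auto_derive; [lra | field; lra].
    - intros t Ht. apply Rdiv_le_0_compat; nra. }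
  unfold f in H. rewrite Rminus_0_r, ln_1 in H. lra.
Qed.

Definition artanh_poly (u : R) : R := 2 * (u + u^3/3 + u^5/5 + u^7/7).

(* Truncations of [ln ((1+u)/(1-u)) = 2 artanh u = 2 (u + u^3/3 + u^5/5 + ...)]. *)
Lemma artanh_bounds u : 0 <= u <= 1/2 ->
  artanh_poly u <= ln ((1+u)/(1-u)) <= artanh_poly u + 2*u^9/(9*(1-u^2)).
Proof.
  intros Hu. unfold artanh_poly.
  assert (Hln0 : ln ((1+0)/(1-0)) = 0) by (replace ((1+0)/(1-0)) with 1 by field; apply ln_1).
  split.
  - set (f t := ln ((1+t)/(1-t)) - 2 * (t + t^3/3 + t^5/5 + t^7/7)).
    assert (f 0 <= f u).
    { apply (incr_of_deriv_nonneg f (fun t => 2*t^8/(1-t^2))); try lra.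
      - intros t Ht. unfold f. auto_derive.
        + repeat split; try lra. apply Rdiv_lt_0_compat; lra.
        + field; repeat split; nra.
      - intros t Ht. apply Rdiv_le_0_compat; nra. }
    unfold f in H. rewrite Hln0 in H. lra.
  - set (f t := 2 * (t + t^3/3 + t^5/5 + t^7/7) + 2*t^9/(9*(1-t^2)) - ln ((1+t)/(1-t))).
    assert (f 0 <= f u).
    { apply (incr_of_deriv_nonneg f (fun t => 4*t^10/(9*(1-t^2)^2))); try lra.
      - intros t Ht. unfold f. auto_derive.
        + repeat split; try nra. apply Rdiv_lt_0_compat; lra.
        + field; repeat split; nra.
      - intros t Ht. apply Rdiv_le_0_compat; [nra |].
        assert (0 < 1 - t^2) by nra. nra. }
    unfold f in H. rewrite Hln0 in H. lra.
Qed.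

Lemma ln_artanh_bounds r : 1 <= r <= 3 ->
  let u := (r-1)/(r+1) in artanh_poly u <= ln r <= artanh_poly u + 2*u^9/(9*(1-u^2)).
Proof.
  intros Hr u.
  assert (Hu : 0 <= u <= 1/2).
  { unfold u. split; [apply Rdiv_le_0_compat; lra |].
    apply Rmult_le_reg_r with (r+1); [lra |]. field_simplify; lra. }
  pose proof (artanh_bounds u Hu) as H.
  replace ((1 + u) / (1 - u)) with r in H by (unfold u; field; lra).
  exact H.
Qed.

Lemma ln_3_2_bounds :
  artanh_poly (1/5) <= ln (3/2) <= artanh_poly (1/5) + 2*(1/5)^9/(9*(1-(1/5)^2)).
Proof.
  pose proof (ln_artanh_bounds (3/2) ltac:(lra)) as H. cbv zeta in H.
  replace ((3/2-1)/(3/2+1)) with (1/5) in H by field. exact H.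
Qed.

Lemma ln2_bounds : 0.693147 < ln 2 < 0.693148.
Proof.
  replace 2 with ((4/3)*(3/2)) by field. rewrite ln_mult by lra.
  pose proof (ln_artanh_bounds (4/3) ltac:(lra)) as H. cbv zeta in H.
  replace ((4/3-1)/(4/3+1)) with (1/7) in H by field.
  pose proof ln_3_2_bounds. unfold artanh_poly in *. cbv [pow] in *. lra.
Qed.

Lemma pow_1m_lower t n : 0 <= t <= 1 -> 1 - INR n * t <= (1 - t)^n.
Proof.
  intros Ht. induction n as [|n IH]; [simpl; lra |].
  rewrite S_INR. simpl. pose proof (pos_INR n).
  assert (0 <= (1-t)^n) by (apply pow_le; lra).
  destruct (Rle_dec 0 (1 - INR n * t)); nra.
Qed.

Lemma pow_1m_upper t n : 0 <= t <= 1 -> (1 - t)^n <= 1 - INR n * t + INR n * INR n * t^2 / 2.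
Proof.
  intros Ht. induction n as [|n IH]; [simpl; lra |].
  rewrite S_INR. simpl. pose proof (pos_INR n).
  assert ((1-t) * (1-t)^n <= (1-t) * (1 - INR n * t + INR n * INR n * t^2 / 2))
    by (apply Rmult_le_compat_l; lra).
  assert (0 <= INR n * INR n * t * t * t) by (repeat apply Rmult_le_pos; lra).
  simpl in *. nra.
Qed.

Lemma pow_pred_r x n : (1 <= n)%nat -> x^n = x * x^(n-1).
Proof. intros Hn. replace n with (S (n-1)) at 1 by lia. reflexivity. Qed.

Lemma ln_ratio_upper y : 0 < y <= 1/8 -> ln ((1-2*y)/(1-y)) <= - y - y^2.
Proof.
  intros Hy. rewrite ln_div by lra.
  pose proof (ln_1m_upper (2*y) ltac:(lra)). pose proof (ln_1m_lower y ltac:(lra)).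
  assert (y^3 <= y^2 * (1/8)) by (simpl; nra).
  nra.
Qed.

Lemma Rdiv_le_compat a A b B : 0 <= a <= A -> 0 < B <= b -> a / b <= A / B.
Proof.
  intros Ha Hb. unfold Rdiv. apply Rmult_le_compat; try lra.
  - apply Rlt_le, Rinv_0_lt_compat. lra.
  - apply Rinv_le_contravar; lra.
Qed.

(** * Roots of convex crossing functions *)

Section ConvexCrossing.

Variables (f df : R -> R) (a b : R).
Hypothesis f_deriv : forall x, a <= x <= b -> is_derive f x (df x).
Hypothesis f_a_neg : f a < 0.

Lemma crossing_exists : a <= b -> 0 < f b -> exists r, a <= r <= b /\ f r = 0.
Proof.
  intros Hab Hb.
  destruct (Ranalysis5.IVT_interv f a b) as [r Hr].
  - intros x Hx. apply continuity_pt_of_ex_derive. exists (df x). apply f_deriv. lra.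
  - destruct (Rle_lt_or_eq_dec a b Hab) as [h | <-]; [exact h | lra].
  - exact f_a_neg.
  - exact Hb.
  - exists r. exact Hr.
Qed.

Hypothesis df_incr : forall x y, a <= x -> x <= y -> y <= b -> df x <= df y.

(* Since [f a < 0 <= f x], the slope somewhere left of [x] is positive, hence so is
   every slope right of [x]. *)
Lemma incr_after_nonneg x y : a <= x -> x < y -> y <= b -> 0 <= f x -> f x < f y.
Proof.
  intros Hax Hxy Hyb Hfx.
  destruct (MVT_is_derive f df a x) as (c0 & Hc0 & E0); [lra | intros; apply f_deriv; lra |].
  destruct (MVT_is_derive f df x y) as (c1 & Hc1 & E1); [lra | intros; apply f_deriv; lra |].
  assert (Hc0_pos : 0 < df c0) by nra.
  assert (df c0 <= df c1) by (apply df_incr; lra).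
  assert (0 < df c1 * (y - x)) by (apply Rmult_lt_0_compat; lra).
  lra.
Qed.

Lemma crossing_sign r x : a <= r <= b -> f r = 0 -> a <= x <= b ->
  (f x < 0 <-> x < r) /\ (0 < f x <-> r < x).
Proof.
  intros Hr Hfr Hx.
  assert (Hleft : x < r -> f x < 0).
  { intros Hxr. destruct (Rlt_or_le (f x) 0) as [h | h]; auto.
    pose proof (incr_after_nonneg x r ltac:(lra) Hxr ltac:(lra) h). lra. }
  assert (Hright : r < x -> 0 < f x).
  { intros Hrx. pose proof (incr_after_nonneg r x ltac:(lra) Hrx ltac:(lra) ltac:(lra)). lra. }
  destruct (Rtotal_order x r) as [h | [h | h]].
  - pose proof (Hleft h). split; split; intros; lra.
  - subst. split; split; intros; lra.
  - pose proof (Hright h). split; split; intros; lra.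
Qed.

End ConvexCrossing.

Section RootContinuity.

Variables (F : R -> R -> R) (r : R -> R) (lo hi a b : R).
Let D d := lo <= d <= hi.
Hypothesis root_range : forall d, D d -> a <= r d <= b.
Hypothesis root_sign : forall d x, D d -> a <= x <= b ->
  (F d x < 0 <-> x < r d) /\ (0 < F d x <-> r d < x).
Hypothesis F_continuous_in_d : forall x d, continuity_pt (fun d => F d x) d.

Lemma root_continuous d0 : D d0 -> filterlim r (within D (locally d0)) (locally (r d0)).
Proof.
  intros Hd0. apply filterlim_locally. intros eps.
  pose proof (cond_pos eps) as Heps.
  pose proof (root_range d0 Hd0) as Hr0.
  assert (Hlow : within D (locally d0) (fun d => r d0 - eps < r d)).
  { unfold within. destruct (Rlt_or_le (r d0 - eps) a) as [h | h].
    - apply filter_forall. intros d Hd. pose proof (root_range d Hd). lra.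
    - assert (Hneg : F d0 (r d0 - eps) < 0) by (apply (root_sign d0 _ Hd0); lra).
      apply (filter_imp (fun d => F d (r d0 - eps) < 0)).
      + intros d Hd HD. apply (root_sign d (r d0 - eps) HD ltac:(lra)) in Hd. lra.
      + exact (proj1 (continuity_pt_filterlim _ _) (F_continuous_in_d _ d0) _ (open_lt 0 _ Hneg)). }
  assert (Hhigh : within D (locally d0) (fun d => r d < r d0 + eps)).
  { unfold within. destruct (Rlt_or_le b (r d0 + eps)) as [h | h].
    - apply filter_forall. intros d Hd. pose proof (root_range d Hd). lra.
    - assert (Hpos : 0 < F d0 (r d0 + eps)) by (apply (root_sign d0 _ Hd0); lra).
      apply (filter_imp (fun d => 0 < F d (r d0 + eps))).
      + intros d Hd HD. apply (root_sign d (r d0 + eps) HD ltac:(lra)) in Hd. lra.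
      + exact (proj1 (continuity_pt_filterlim _ _) (F_continuous_in_d _ d0) _ (open_gt 0 _ Hpos)). }
  generalize (filter_and _ _ Hlow Hhigh). apply filter_imp.
  intros d [H1 H2]. change (Rabs (r d - r d0) < eps). apply Rabs_def1; lra.
Qed.

End RootContinuity.

Lemma continuous_on_closed_of_filterlim f a b :
  (forall d0, a <= d0 <= b ->
     filterlim f (within (fun d => a <= d <= b) (locally d0)) (locally (f d0))) ->
  continuous_on_closed f a b.
Proof.
  intros Hf d0 Hd0 eps Heps.
  destruct (proj1 (filterlim_locally _ _) (Hf d0 Hd0) (mkposreal eps Heps)) as [delta Hdelta].
  exists delta. split; [apply cond_pos |]. intros d Hd Hdd. exact (Hdelta d Hdd Hd).
Qed.

(** * The fixed-point equation *)

Section FixedPoint.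

Variable k : nat.
Hypothesis hk : (4 <= k)%nat.

Lemma pow2_ge_16 : 16 <= 2^k.
Proof. replace 16 with (2^4) by (simpl; lra). apply Rle_pow; [lra | exact hk]. Qed.

Lemma pow2_km1 : 2^(k-1) = 2^k/2.
Proof. rewrite (pow_pred_r 2 k) by lia. field. Qed.

Lemma half_pow_km1 : (1/2)^(k-1) = 2/2^k.
Proof.
  unfold Rdiv at 1. rewrite Rpow_mult_distr, pow1, pow_inv, pow2_km1.
  field. apply pow_nonzero. lra.
Qed.

Lemma pow_km1_small x : 0 < x <= 1/2 -> 0 < x^(k-1) <= 1/8.
Proof.
  intros Hx. split; [apply pow_lt; lra |].
  apply Rle_trans with ((1/2)^(k-1)); [apply pow_incr; lra |].
  replace (k-1)%nat with (3 + (k-4))%nat by lia. rewrite pow_add.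
  assert (H1 : (1/2)^(k-4) <= 1^(k-4)) by (apply pow_incr; lra). rewrite pow1 in H1.
  assert (0 < (1/2)^(k-4)) by (apply pow_lt; lra).
  simpl. nra.
Qed.

Lemma pow_k_small x : 0 < x <= 1/2 -> 0 < 2 * x^k <= 1/8.
Proof.
  intros Hx. pose proof (pow_km1_small x Hx).
  rewrite (pow_pred_r x k) by lia. nra.
Qed.

Lemma hatPsi_bounds x : 0 < x <= 1/2 -> 0 < hatPsi k x < 1.
Proof.
  intros Hx. pose proof (pow_km1_small x Hx). unfold hatPsi.
  split; [apply Rdiv_lt_0_compat; lra |].
  apply Rmult_lt_reg_r with (1 - x^(k-1)); [lra |].
  unfold Rdiv. rewrite Rmult_assoc, Rinv_l; lra.
Qed.

Definition fp_gap (d x : R) : R :=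
  exp ((d-1) * ln (hatPsi k x)) - (1 - 2*x)/(1-x).

Lemma hatPsi_pow_bounds d x : 1 < d -> 0 < x <= 1/2 ->
  0 < exp ((d-1) * ln (hatPsi k x)) < 1.
Proof.
  intros Hd Hx. pose proof (hatPsi_bounds x Hx).
  assert (ln (hatPsi k x) < 0) by (rewrite <- ln_1; apply ln_increasing; lra).
  assert (Hneg : (d-1) * ln (hatPsi k x) < 0) by nra.
  pose proof (exp_increasing _ _ Hneg). rewrite exp_0 in *.
  split; [apply exp_pos | lra].
Qed.

Lemma Psi_fixed_iff d x : 1 < d -> 0 < x <= 1/2 -> (Psi k d x = x <-> fp_gap d x = 0).
Proof.
  intros Hd Hx. pose proof (hatPsi_pow_bounds d x Hd Hx).
  unfold Psi, dotPsi, fp_gap, Rpower.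
  set (w := exp ((d-1) * ln (hatPsi k x))) in *.
  split; intro E.
  - assert (Ew : 1 - w = x * (2 - w)) by (rewrite <- E; field; lra).
    assert (w = (1 - 2*x)/(1-x)) by (field_simplify_eq; lra).
    lra.
  - replace w with ((1-2*x)/(1-x)) by lra. field. lra.
Qed.

Lemma fp_gap_half_pos d : 1 < d -> 0 < fp_gap d (1/2).
Proof.
  intros Hd. pose proof (hatPsi_pow_bounds d (1/2) Hd ltac:(lra)).
  unfold fp_gap. replace ((1 - 2*(1/2))/(1-1/2)) with 0 by field. lra.
Qed.

Lemma fp_gap_antitone_in_d d1 d2 x : 0 < x <= 1/2 -> d1 <= d2 -> fp_gap d2 x <= fp_gap d1 x.
Proof.
  intros Hx Hd. pose proof (hatPsi_bounds x Hx). unfold fp_gap.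
  assert (ln (hatPsi k x) < 0) by (rewrite <- ln_1; apply ln_increasing; lra).
  assert (Hle : (d2-1) * ln (hatPsi k x) <= (d1-1) * ln (hatPsi k x)) by nra.
  destruct (Rle_lt_or_eq_dec _ _ Hle) as [h | ->]; [| lra].
  pose proof (exp_increasing _ _ h). lra.
Qed.

Lemma fp_gap_continuous_in_d x d : continuity_pt (fun d => fp_gap d x) d.
Proof.
  apply continuity_pt_of_ex_derive. unfold fp_gap. auto_derive. exact I.
Qed.

(* [fp_gap] is convex wherever [J] decreases. *)
Definition J (d x : R) : R :=
  exp ((d-1) * ln (hatPsi k x)) * x^(k-2) / ((1 - x^(k-1)) * (1 - 2*x^(k-1))).

Definition dfp_gap (d x : R) : R := 1/(1-x)^2 - (d-1) * INR (k-1) * J d x.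

Lemma fp_gap_deriv d x : 0 < x <= 1/2 -> is_derive (fp_gap d) x (dfp_gap d x).
Proof.
  intros Hx. pose proof (pow_km1_small x Hx). pose proof (hatPsi_bounds x Hx).
  unfold fp_gap, dfp_gap, J, hatPsi in *. auto_derive.
  - repeat split; try lra. apply Rdiv_lt_0_compat; lra.
  - replace (Init.Nat.pred (k-1)) with (k-2)%nat by lia.
    set (E := exp _). field. repeat split; lra.
Qed.

Definition lnJ (d x : R) : R :=
  (d-1) * ln (hatPsi k x) + INR (k-2) * ln x - ln (1 - x^(k-1)) - ln (1 - 2*x^(k-1)).

Definition dlnJ (d x : R) : R :=
  (d-1) * (- (INR (k-1) * x^(k-2)) / ((1 - x^(k-1)) * (1 - 2*x^(k-1))))
  + INR (k-2) / x + INR (k-1) * x^(k-2) / (1 - x^(k-1))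
  + 2 * INR (k-1) * x^(k-2) / (1 - 2*x^(k-1)).

Lemma J_exp d x : 0 < x <= 1/2 -> J d x = exp (lnJ d x).
Proof.
  intros Hx. pose proof (pow_km1_small x Hx). unfold J, lnJ.
  unfold Rminus. rewrite !exp_plus, !exp_Ropp, !exp_ln by lra.
  rewrite <- (Rpower_pow (k-2) x) by lra. unfold Rpower.
  field. split; lra.
Qed.

Lemma lnJ_deriv d x : 0 < x <= 1/2 -> is_derive (lnJ d) x (dlnJ d x).
Proof.
  intros Hx. pose proof (pow_km1_small x Hx). pose proof (hatPsi_bounds x Hx).
  unfold lnJ, dlnJ, hatPsi in *. auto_derive.
  - repeat split; try lra. apply Rdiv_lt_0_compat; lra.
  - replace (Init.Nat.pred (k-1)) with (k-2)%nat by lia.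
    field. repeat split; lra.
Qed.

Lemma dlnJ_neg d x : 0 < x <= 1/2 -> x^(k-1) * (d-4) >= 1 -> dlnJ d x < 0.
Proof.
  intros Hx HC. pose proof (pow_km1_small x Hx) as Hy.
  assert (HK : INR (k-1) = INR (k-2) + 1).
  { replace (k-1)%nat with (S (k-2)) by lia. apply S_INR. }
  assert (HK2 : 2 <= INR (k-2)) by (replace 2 with (INR 2) by (simpl; lra); apply le_INR; lia).
  assert (Ey : x^(k-1) = x * x^(k-2)) by (rewrite (pow_pred_r x (k-1)) by lia; do 2 f_equal; lia).
  rewrite Ey in *.
  set (p := x^(k-2)) in *. set (y := x * p) in *.
  assert (Hp : 0 < p) by (apply pow_lt; lra).
  assert (Hq : 1 <= y*(d-4+4*y)/((1-y)*(1-2*y))).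
  { assert (0 < (1-y)*(1-2*y) <= 1) by (split; nra).
    apply Rmult_le_reg_r with ((1-y)*(1-2*y)); [lra |].
    unfold Rdiv. rewrite Rmult_assoc, Rinv_l by lra. nra. }
  assert (E : dlnJ d x = (INR (k-2) - INR (k-1) * (y * (d - 4 + 4*y) / ((1-y)*(1-2*y)))) / x).
  { unfold dlnJ. rewrite Ey. fold p y. unfold y. field. fold y. repeat split; lra. }
  rewrite E. apply Rdiv_neg_pos; [rewrite HK; nra | lra].
Qed.

Lemma J_antitone d x1 x2 : 0 < x1 -> x1 <= x2 <= 1/2 ->
  (forall x, x1 <= x <= x2 -> x^(k-1) * (d-4) >= 1) -> J d x2 <= J d x1.
Proof.
  intros H1 H2 HC. rewrite !J_exp by lra.
  assert (Hln : - lnJ d x1 <= - lnJ d x2).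
  { apply (incr_of_deriv_nonneg (fun x => - lnJ d x) (fun x => - dlnJ d x)); [lra | |].
    - intros x Hx. apply (is_derive_opp (lnJ d)), lnJ_deriv. lra.
    - intros x Hx. pose proof (dlnJ_neg d x ltac:(lra) (HC x Hx)). lra. }
  destruct (Rle_lt_or_eq_dec (lnJ d x2) (lnJ d x1) ltac:(lra)) as [h | ->]; [| lra].
  pose proof (exp_increasing _ _ h). lra.
Qed.

Lemma dfp_gap_incr d x1 x2 : 1 <= d -> 0 < x1 -> x1 <= x2 <= 1/2 ->
  (forall x, x1 <= x <= x2 -> x^(k-1) * (d-4) >= 1) -> dfp_gap d x1 <= dfp_gap d x2.
Proof.
  intros Hd H1 H2 HC. unfold dfp_gap.
  pose proof (J_antitone d x1 x2 H1 H2 HC). pose proof (pos_INR (k-1)).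
  assert (1/(1-x1)^2 <= 1/(1-x2)^2).
  { unfold Rdiv. rewrite !Rmult_1_l. apply Rinv_le_contravar; [nra |]. apply pow_incr. lra. }
  assert ((d-1) * INR (k-1) * J d x2 <= (d-1) * INR (k-1) * J d x1)
    by (apply Rmult_le_compat_l; [nra | auto]).
  lra.
Qed.

Definition xlo : R := 1/2 - 1/2^k.

Lemma xlo_bounds : 7/16 <= xlo < 1/2.
Proof.
  unfold xlo. pose proof pow2_ge_16.
  assert (0 < 1/2^k <= 1/16).
  { split; [apply Rdiv_lt_0_compat; lra |].
    apply Rmult_le_compat_l; [lra |]. apply Rinv_le_contravar; lra. }
  lra.
Qed.

(* The last condition makes [fp_gap d] convex on [[xlo, 1/2]]; with the second one it has
   exactly one root there, which is what [xkd] picks. *)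
Definition admissible (d : R) : Prop :=
  4 < d /\ fp_gap d xlo < 0 /\ xlo^(k-1) * (d - 4) >= 1.

Lemma admissible_mono d1 d2 : admissible d1 -> d1 <= d2 -> admissible d2.
Proof.
  intros (Hd & HG & HC) H12. pose proof xlo_bounds.
  split; [lra | split].
  - pose proof (fp_gap_antitone_in_d d1 d2 xlo ltac:(lra) H12). lra.
  - assert (0 <= xlo^(k-1)) by (apply pow_le; lra).
    assert (xlo^(k-1) * (d1 - 4) <= xlo^(k-1) * (d2 - 4)) by (apply Rmult_le_compat_l; lra).
    lra.
Qed.

Section Admissible.

Variable d : R.
Hypothesis Hadm : admissible d.

Lemma admissible_dfp_gap_incr x y : xlo <= x -> x <= y -> y <= 1/2 -> dfp_gap d x <= dfp_gap d y.
Proof.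
  intros Hx Hxy Hy. destruct Hadm as (Hd & _ & HC). pose proof xlo_bounds.
  apply dfp_gap_incr; try lra.
  intros z Hz. assert (xlo^(k-1) <= z^(k-1)) by (apply pow_incr; lra). nra.
Qed.

Lemma xkd_root : xlo <= xkd k d <= 1/2 /\ fp_gap d (xkd k d) = 0.
Proof.
  destruct Hadm as (Hd & HG & HC). pose proof xlo_bounds.
  assert (Hspec : fp_spec k d (xkd k d)).
  { unfold xkd. apply epsilon_spec.
    destruct (crossing_exists (fp_gap d) (dfp_gap d) xlo (1/2)) as (r & Hr & Er); try lra.
    - intros x Hx. apply fp_gap_deriv. lra.
    - apply fp_gap_half_pos. lra.
    - exists r. split; [exact Hr | apply Psi_fixed_iff; lra]. }
  destruct Hspec as [Hr E]. change (xlo <= xkd k d <= 1/2) in Hr.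
  split; [exact Hr | apply Psi_fixed_iff; [lra | lra | exact E]].
Qed.

Lemma xkd_sign x : xlo <= x <= 1/2 ->
  (fp_gap d x < 0 <-> x < xkd k d) /\ (0 < fp_gap d x <-> xkd k d < x).
Proof.
  intros Hx. pose proof xlo_bounds. destruct xkd_root as [Hr Er].
  apply (crossing_sign (fp_gap d) (dfp_gap d) xlo (1/2)); auto.
  - intros z Hz. apply fp_gap_deriv. lra.
  - apply Hadm.
  - apply admissible_dfp_gap_incr.
Qed.

End Admissible.

Lemma xkd_continuous lo hi d0 : (forall d, lo <= d <= hi -> admissible d) -> lo <= d0 <= hi ->
  filterlim (xkd k) (within (fun d => lo <= d <= hi) (locally d0)) (locally (xkd k d0)).
Proof.
  intros Hadm Hd0.
  apply (root_continuous fp_gap (xkd k) lo hi xlo (1/2)); auto.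
  - intros d Hd. apply xkd_root, Hadm, Hd.
  - intros d x Hd Hx. apply xkd_sign; auto.
  - apply fp_gap_continuous_in_d.
Qed.

Definition Phi0 (x : R) : R := - ln (1 - x) + ln (1 - 2 * x^k) - ln (1 - x^(k-1)).
Definition Phi1 (x : R) : R := - (1 - / INR k) * ln (1 - 2 * x^k) + ln (1 - x^(k-1)).

Lemma Phi_decomp d x : d <> 0 -> Phi k d x = Phi0 x + d * Phi1 x.
Proof.
  intros Hd. assert (INR k <> 0) by (apply not_0_INR; lia).
  unfold Phi, Phi0, Phi1. field. split; assumption.
Qed.

Lemma Phi0_Phi1_continuous x : 0 < x <= 1/2 -> continuity_pt Phi0 x /\ continuity_pt Phi1 x.
Proof.
  intros Hx. pose proof (pow_km1_small x Hx). pose proof (pow_k_small x Hx).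
  split; apply continuity_pt_of_ex_derive; unfold Phi0, Phi1; auto_derive; repeat split; lra.
Qed.

Lemma Phistar_continuous lo hi : (forall d, lo <= d <= hi -> admissible d) ->
  continuous_on_closed (Phistar k) lo hi.
Proof.
  intros Hadm. apply continuous_on_closed_of_filterlim. intros d0 Hd0.
  pose proof xlo_bounds.
  assert (Hcomp : forall g, (forall x, xlo <= x <= 1/2 -> continuity_pt g x) ->
      filterlim (fun d => g (xkd k d)) (within (fun d => lo <= d <= hi) (locally d0))
        (locally (g (xkd k d0)))).
  { intros g Hg. apply (filterlim_comp _ _ _ _ _ _ _ _ (xkd_continuous lo hi d0 Hadm Hd0)).
    apply continuity_pt_filterlim, Hg, xkd_root, Hadm, Hd0. }
  assert (Hd0pos : d0 <> 0) by (destruct (Hadm d0 Hd0); lra).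
  unfold Phistar at 2. rewrite Phi_decomp by exact Hd0pos.
  apply (filterlim_within_ext _ (fun d => Phi0 (xkd k d) + d * Phi1 (xkd k d))).
  { intros d Hd. unfold Phistar. symmetry. apply Phi_decomp. destruct (Hadm d Hd). lra. }
  eapply (filterlim_comp_2 (fun d => Phi0 (xkd k d)) (fun d => d * Phi1 (xkd k d)) Rplus);
    [| | exact (filterlim_plus (V := R_NormedModule) _ (d0 * Phi1 (xkd k d0)))].
  - apply Hcomp. intros x Hx. apply Phi0_Phi1_continuous. lra.
  - eapply (filterlim_comp_2 (fun d => d) (fun d => Phi1 (xkd k d)) Rmult);
      [| | exact (filterlim_mult (K := R_AbsRing) d0 (Phi1 (xkd k d0)))].
    + apply filter_le_within.
    + apply Hcomp. intros x Hx. apply Phi0_Phi1_continuous. lra.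
Qed.

Definition dPhi (d x : R) : R :=
  1/(1-x) + d*(1 - /INR k - /d) * (2 * (INR k * x^(k-1))) / (1 - 2*x^k)
  - (d-1) * (INR (k-1) * x^(k-2)) / (1 - x^(k-1)).

Lemma Phi_deriv d x : 0 < x <= 1/2 -> is_derive (Phi k d) x (dPhi d x).
Proof.
  intros Hx. pose proof (pow_km1_small x Hx). pose proof (pow_k_small x Hx).
  unfold Phi, dPhi. auto_derive; [repeat split; lra |].
  replace (Init.Nat.pred (k-1)) with (k-2)%nat by lia.
  replace (Init.Nat.pred k) with (k-1)%nat by lia.
  set (c := d * (1 - / INR k - / d)). field. repeat split; lra.
Qed.

Definition bracket (d x1 : R) : Prop :=
  xlo <= x1 <= 1/2 /\ fp_gap d x1 < 0 /\ forall x, x1 <= x <= 1/2 -> 0 < dPhi d x.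

Lemma Phistar_bracket d x1 : admissible d -> bracket d x1 ->
  Phi k d x1 <= Phistar k d <= Phi k d (1/2).
Proof.
  intros Hadm (Hx1 & HG & HdPhi). pose proof xlo_bounds.
  destruct (xkd_root d Hadm) as [Hr _].
  assert (Hlt : x1 < xkd k d) by (apply (xkd_sign d Hadm x1 Hx1), HG).
  unfold Phistar.
  split; apply (incr_of_deriv_nonneg (Phi k d) (dPhi d)); try lra;
    intros x Hx; [apply Phi_deriv | apply Rlt_le, HdPhi | apply Phi_deriv | apply Rlt_le, HdPhi];
    lra.
Qed.

(* Each term of [dPhi d x] is monotone in [x]: bound it by its value at the worse endpoint. *)
Lemma dPhi_lower_bound d x w1 w2 : 1 < d -> 0 < w1 -> w1 <= x <= w2 -> w2 <= 1/2 ->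
  let P := w2^(k-2) in
  1/(1-w1) - 2*w2*P/(1 - 2*w2^2*P)
    - (d-1) * INR (k-1) * P * (1-2*w1) / ((1 - 2*w2^2*P) * (1 - w2*P)) <= dPhi d x.
Proof.
  intros Hd Hw1 Hx Hw2 P.
  assert (Hsplit : forall z, z^k = z^2 * z^(k-2) /\ z^(k-1) = z * z^(k-2)).
  { intros z. split.
    - rewrite <- pow_add. f_equal. lia.
    - rewrite (pow_pred_r z (k-1)) by lia. do 2 f_equal. lia. }
  pose proof (pow_km1_small x ltac:(lra)) as Hy. pose proof (pow_k_small x ltac:(lra)) as Hxk.
  pose proof (pow_km1_small w2 ltac:(lra)) as Hy2. pose proof (pow_k_small w2 ltac:(lra)) as Hxk2.
  destruct (Hsplit x) as [Ek Ek1]. destruct (Hsplit w2) as [Ek2 Ek21].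
  rewrite Ek1 in Hy. rewrite Ek in Hxk. rewrite Ek21 in Hy2. rewrite Ek2 in Hxk2.
  fold P in Hy2, Hxk2.
  assert (HK : INR k = INR (k-1) + 1) by (rewrite <- S_INR; f_equal; lia).
  assert (HK1 : 3 <= INR (k-1)) by (replace 3 with (INR 3) by (simpl; lra); apply le_INR; lia).
  assert (Hp : 0 < x^(k-2) <= P) by (split; [apply pow_lt; lra | apply pow_incr; lra]).
  set (p := x^(k-2)) in *.
  set (D := (d-1) * INR (k-1)).
  assert (E : dPhi d x = 1/(1-x) - 2*x*p/(1 - 2*x^2*p) - D * p * (1-2*x) / ((1-2*x^2*p)*(1-x*p))).
  { unfold dPhi. rewrite Ek, Ek1. fold p. rewrite HK. unfold D. field. repeat split; lra. }
  rewrite E.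
  assert (Hx2 : x^2 <= w2^2) by (apply pow_incr; lra).
  assert (Hx2p : x^2 * p <= w2^2 * P) by (apply Rmult_le_compat; nra).
  assert (Hxp : x * p <= w2 * P) by (apply Rmult_le_compat; nra).
  assert (HD : 0 <= D) by (unfold D; nra).
  assert (T1 : 1/(1-w1) <= 1/(1-x)) by (apply Rdiv_le_compat; lra).
  assert (T2 : 2*x*p/(1 - 2*x^2*p) <= 2*w2*P/(1 - 2*w2^2*P))
    by (apply Rdiv_le_compat; split; nra).
  assert (T3 : D * p * (1-2*x) / ((1-2*x^2*p)*(1-x*p))
               <= D * P * (1-2*w1) / ((1 - 2*w2^2*P) * (1 - w2*P))).
  { apply Rdiv_le_compat; split.
    - apply Rmult_le_pos; nra.
    - apply Rmult_le_compat; nra.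
    - apply Rmult_lt_0_compat; lra.
    - apply Rmult_le_compat; lra. }
  unfold D in *. lra.
Qed.

Lemma Phi_lower_bound d x : 0 < x <= 1/2 -> 1 <= d -> 0 <= d * (1 - / INR k - / d) ->
  - ln (1 - x) + d * (1 - / INR k - / d) * (2*x^k + (2*x^k)^2/2)
    - (d-1) * (x^(k-1) + (x^(k-1))^2/2 + 2/3 * (x^(k-1))^3) <= Phi k d x.
Proof.
  intros Hx Hd Hc. pose proof (pow_km1_small x Hx). pose proof (pow_k_small x Hx).
  pose proof (ln_1m_upper (2*x^k) ltac:(lra)). pose proof (ln_1m_lower (x^(k-1)) ltac:(lra)).
  unfold Phi. set (c := d * (1 - / INR k - / d)) in *.
  assert (c * ln (1 - 2 * x^k) <= c * (- (2*x^k) - (2*x^k)^2/2)) by (apply Rmult_le_compat_l; lra).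
  assert ((d-1) * (- x^(k-1) - (x^(k-1))^2/2 - 2/3*(x^(k-1))^3) <= (d-1) * ln (1 - x^(k-1)))
    by (apply Rmult_le_compat_l; lra).
  lra.
Qed.

Lemma fp_gap_neg_of_ln d x : 0 < x < 1/2 ->
  (d-1) * ln (hatPsi k x) < ln ((1-2*x)/(1-x)) -> fp_gap d x < 0.
Proof.
  intros Hx H. unfold fp_gap.
  apply exp_increasing in H. rewrite exp_ln in H by (apply Rdiv_lt_0_compat; lra).
  lra.
Qed.

Lemma fp_gap_neg_of_pow d x : 1 <= d -> 0 < x < 1/2 ->
  - (d-1) * (x^(k-1) + (x^(k-1))^2) < ln ((1-2*x)/(1-x)) -> fp_gap d x < 0.
Proof.
  intros Hd Hx H. apply fp_gap_neg_of_ln; [lra |]. unfold hatPsi.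
  pose proof (pow_km1_small x ltac:(lra)) as Hy. pose proof (ln_ratio_upper _ Hy).
  assert ((d-1) * ln ((1 - 2 * x^(k-1)) / (1 - x^(k-1)))
          <= (d-1) * (- x^(k-1) - (x^(k-1))^2)) by (apply Rmult_le_compat_l; lra).
  lra.
Qed.

Lemma Phi_ubd_half_neg : Phi k (d_ubd k) (1/2) < 0.
Proof.
  pose proof ln2_bounds. pose proof pow2_ge_16. pose proof half_pow_km1 as Eh.
  assert (4 <= INR k) by (replace 4 with (INR 4) by (simpl; lra); apply le_INR; exact hk).
  assert (Ehk : 2 * (1/2)^k = 2/2^k) by (rewrite (pow_pred_r (1/2) k), Eh by lia; field; lra).
  unfold Phi, d_ubd. rewrite pow2_km1, Ehk, Eh.
  replace (1 - 1/2) with (/2) by field. rewrite ln_Rinv by lra.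
  set (N := 2^k) in *. set (L := ln 2) in *.
  replace (- - L - N / 2 * INR k * L * (1 - / INR k - / (N / 2 * INR k * L)) * ln (1 - 2 / N)
    + (N / 2 * INR k * L - 1) * ln (1 - 2 / N)) with (L + N/2 * L * ln (1 - 2/N))
    by (field; repeat split; nra).
  assert (H2N : 0 < 2/N <= 1/8) by (split; [apply Rdiv_lt_0_compat | apply Rle_div_l]; lra).
  pose proof (ln_1m_upper (2/N) ltac:(lra)).
  assert (N/2 * L * ln (1 - 2/N) <= N/2 * L * (- (2/N) - (2/N)^2/2))
    by (apply Rmult_le_compat_l; nra).
  replace (N/2 * L * (- (2/N) - (2/N)^2/2)) with (- L - L/N) in * by (field; lra).
  assert (0 < L/N) by (apply Rdiv_lt_0_compat; lra).
  lra.
Qed.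

End FixedPoint.

(** * Numerical certificates *)

Definition sign_certificates (k : nat) : Prop :=
  d_lbd k <= d_ubd k /\ admissible k (d_lbd k) /\
  (exists x1, bracket k (d_lbd k) x1 /\ 0 < Phi k (d_lbd k) x1) /\
  (exists x2, bracket k (d_ubd k) x2).

Ltac dPhi_pos_on a b :=
  eapply Rlt_le_trans;
    [| apply dPhi_lower_bound with (w1 := a) (w2 := b); first [lia | lra]]; simpl; lra.

Lemma fp_gap_4_lbd : fp_gap 4 (167/10) (7/16) < 0.
Proof.
  apply fp_gap_neg_of_ln; [lra |]. unfold hatPsi. simpl (4-1)%nat.
  replace ((1 - 2 * (7/16)^3) / (1 - (7/16)^3)) with (/ (3753/3410)) by (simpl; field).
  replace ((1 - 2 * (7/16)) / (1 - 7/16)) with (/ (2 * (3/2) * (3/2))) by field.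
  rewrite !ln_Rinv, !ln_mult by lra.
  pose proof (ln_artanh_bounds (3753/3410) ltac:(lra)) as H. cbv zeta in H.
  replace ((3753/3410-1)/(3753/3410+1)) with (343/7163) in H by field.
  pose proof ln_3_2_bounds. pose proof ln2_bounds.
  unfold artanh_poly in *. simpl in *. lra.
Qed.

Lemma Phi_4_lbd_pos : 0 < Phi 4 (167/10) (7/16).
Proof.
  assert (Hc : 167/10 * (1 - / INR 4 - / (167/10)) = 461/40) by (simpl; field).
  eapply Rlt_le_trans; [| apply Phi_lower_bound; [lia | lra | lra | rewrite Hc; lra]].
  rewrite Hc.
  replace (1 - 7/16) with (/ (2 * 2 / ((3/2) * (3/2)))) by field.
  rewrite ln_Rinv, ln_div, !ln_mult by lra.
  pose proof ln_3_2_bounds. pose proof ln2_bounds.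
  unfold artanh_poly in *. simpl in *. lra.
Qed.

Lemma dPhi_4_lbd_pos x : 7/16 <= x <= 1/2 -> 0 < dPhi 4 (167/10) x.
Proof.
  intros Hx.
  destruct (Rle_dec x (29/64)); [dPhi_pos_on (7/16) (29/64) |].
  destruct (Rle_dec x (30/64)); [dPhi_pos_on (29/64) (30/64) |].
  destruct (Rle_dec x (31/64)); [dPhi_pos_on (30/64) (31/64) |].
  dPhi_pos_on (31/64) (1/2).
Qed.

Lemma fp_gap_4_ubd : fp_gap 4 (32 * ln 2) (15/32) < 0.
Proof.
  pose proof ln2_bounds.
  apply fp_gap_neg_of_pow; [lia | lra | lra |].
  replace ((1 - 2 * (15/32)) / (1 - 15/32)) with (/ (2 * 2 * 2 * (17/16))) by field.
  rewrite ln_Rinv, !ln_mult by lra.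
  pose proof (ln_1p_le (1/16) ltac:(lra)). replace (1 + 1/16) with (17/16) in * by field.
  simpl. lra.
Qed.

Lemma sign_certificates_4 : sign_certificates 4.
Proof.
  pose proof ln2_bounds.
  assert (Hl : d_lbd 4 = 167/10) by (unfold d_lbd; simpl; lra).
  assert (Hu : d_ubd 4 = 32 * ln 2) by (unfold d_ubd; simpl; lra).
  assert (Hx : xlo 4 = 7/16) by (unfold xlo; simpl; lra).
  pose proof fp_gap_4_lbd.
  unfold sign_certificates, admissible, bracket. rewrite Hl, Hu, Hx.
  split; [lra | split; [split; [lra | split; [assumption | simpl; lra]] | split]].
  - exists (7/16). split; [split; [lra | split; [assumption | exact dPhi_4_lbd_pos]] |].
    exact Phi_4_lbd_pos.
  - exists (15/32). split; [lra | split; [exact fp_gap_4_ubd |]].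
    intros x Hx'. dPhi_pos_on (15/32) (1/2).
Qed.

Lemma fp_gap_5_lbd : fp_gap 5 (70 * ln 2) (15/32) < 0.
Proof.
  pose proof ln2_bounds.
  apply fp_gap_neg_of_pow; [lia | lra | lra |].
  replace ((1 - 2 * (15/32)) / (1 - 15/32)) with (/ (2 * 2 * 2 * (17/16))) by field.
  rewrite ln_Rinv, !ln_mult by lra.
  pose proof (ln_1p_le (1/16) ltac:(lra)). replace (1 + 1/16) with (17/16) in * by field.
  simpl. lra.
Qed.

Lemma Phi_5_lbd_pos : 0 < Phi 5 (70 * ln 2) (15/32).
Proof.
  pose proof ln2_bounds.
  assert (Hc : 70 * ln 2 * (1 - / INR 5 - / (70 * ln 2)) = 56 * ln 2 - 1) by (simpl; field; lra).
  eapply Rlt_le_trans; [| apply Phi_lower_bound; [lia | lra | lra | rewrite Hc; lra]].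
  rewrite Hc.
  replace (1 - 15/32) with ((17/16) / 2) by field.
  rewrite ln_div by lra.
  pose proof (ln_1p_le (1/16) ltac:(lra)). replace (1 + 1/16) with (17/16) in * by field.
  simpl in *. lra.
Qed.

Lemma dPhi_5_pos d x : 70 * ln 2 <= d <= 80 * ln 2 -> 15/32 <= x <= 1/2 -> 0 < dPhi 5 d x.
Proof.
  intros Hd Hx. pose proof ln2_bounds.
  destruct (Rle_dec x (61/128)); [dPhi_pos_on (15/32) (61/128) |].
  destruct (Rle_dec x (62/128)); [dPhi_pos_on (61/128) (62/128) |].
  destruct (Rle_dec x (63/128)); [dPhi_pos_on (62/128) (63/128) |].
  dPhi_pos_on (63/128) (1/2).
Qed.

Lemma sign_certificates_5 : sign_certificates 5.
Proof.
  pose proof ln2_bounds.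
  assert (Hl : d_lbd 5 = 70 * ln 2) by (unfold d_lbd; simpl; lra).
  assert (Hu : d_ubd 5 = 80 * ln 2) by (unfold d_ubd; simpl; lra).
  assert (Hx : xlo 5 = 15/32) by (unfold xlo; simpl; lra).
  pose proof fp_gap_5_lbd.
  pose proof (fp_gap_antitone_in_d 5 ltac:(lia) (70 * ln 2) (80 * ln 2) (15/32)
    ltac:(lra) ltac:(lra)).
  unfold sign_certificates, admissible, bracket. rewrite Hl, Hu, Hx.
  split; [lra | split; [split; [lra | split; [assumption | simpl; lra]] | split]].
  - exists (15/32). split; [split; [lra | split; [assumption |]] | exact Phi_5_lbd_pos].
    intros x Hx'. apply dPhi_5_pos; lra.
  - exists (15/32). split; [lra | split; [lra |]].
    intros x Hx'. apply dPhi_5_pos; lra.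
Qed.

Section LargeKInequalities.

Variables K N L : R.
Hypothesis HK : 6 <= K.
Hypothesis HN : 16/9 * K^2 <= N.
Hypothesis HL : 0.693 < L < 0.694.

Lemma N_ge_64 : 64 <= N.
Proof. nra. Qed.

Lemma ineq_fp_gap s : 1 <= s <= 2 ->
  (K-s)*L + s/N < ((N/2 - 2) * K * L - 1) * (2/N * (1 - s*(K-1)/N)).
Proof.
  intros Hs. pose proof N_ge_64.
  replace (((N/2 - 2) * K * L - 1) * (2/N * (1 - s*(K-1)/N))) with
    (K*L - ((4*K*L + 2) + s*K*(K-1)*L)/N + (4*K*L+2)*s*(K-1)/N^2) by (field; lra).
  assert (0 <= (4*K*L+2)*s*(K-1)/N^2)
    by (apply Rdiv_le_0_compat; [apply Rmult_le_pos; [apply Rmult_le_pos |] | ]; nra).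
  assert (Hgap : 4*K*L + 2 < L*N - K*(K-1)*L - 1) by nra.
  assert ((s - 1) * (L*N - K*(K-1)*L - 1) >= 0) by (apply Rle_ge, Rmult_le_pos; nra).
  assert (((4*K*L + 2) + s*K*(K-1)*L + s)/N < s*L) by (apply Rlt_div_l; nra).
  replace (((4*K*L + 2) + s*K*(K-1)*L + s)/N) with (((4*K*L + 2) + s*K*(K-1)*L)/N + s/N) in *
    by (field; lra).
  lra.
Qed.

Lemma ineq_admissible : 1 <= (2/N * (1 - 2*(K-1)/N)) * ((N/2 - 2) * K * L - 4).
Proof.
  pose proof N_ge_64.
  replace ((2/N * (1 - 2*(K-1)/N)) * ((N/2 - 2) * K * L - 4)) with
    (K*L - ((4*K*L + 8) + 2*K*(K-1)*L)/N + (4*K*L+8)*2*(K-1)/N^2) by (field; lra).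
  assert (0 <= (4*K*L+8)*2*(K-1)/N^2) by (apply Rdiv_le_0_compat; nra).
  assert ((K*L - 1) * (N - 16/9*K^2) >= 0) by (apply Rle_ge, Rmult_le_pos; nra).
  assert (K^2*L*(K-6) >= 0) by (apply Rle_ge, Rmult_le_pos; nra).
  assert (K^2 * (L - 0.693) >= 0) by (apply Rle_ge, Rmult_le_pos; nra).
  assert (K * (K - 6) >= 0) by (apply Rle_ge, Rmult_le_pos; nra).
  assert (((4*K*L+8) + 2*K*(K-1)*L)/N <= K*L - 1) by (apply Rle_div_l; nra).
  lra.
Qed.

Lemma ineq_dPhi d : 1 < d <= N/2 * K * L ->
  0 < 2*N/(N+1) - 4/(N-2) - 4*(d-1)*(K-1)/(N-2)^2.
Proof.
  intros Hd. pose proof N_ge_64.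
  assert (4*(d-1)*(K-1)/(N-2)^2 <= 9/8 * L * N^2 / (N-2)^2).
  { apply Rmult_le_compat_r; [apply Rlt_le, Rinv_0_lt_compat; nra | nra]. }
  assert (9/8 * L * N^2 / (N-2)^2 <= 0.85).
  { apply Rmult_le_reg_r with ((N-2)^2); [nra |]. field_simplify; nra. }
  assert (4/(N-2) <= 0.07) by (apply Rmult_le_reg_r with (N-2); [lra |]; field_simplify; nra).
  assert (1.9 <= 2*N/(N+1)) by (apply Rmult_le_reg_r with (N+1); [lra |]; field_simplify; nra).
  lra.
Qed.

Lemma ineq_Phi_main_terms :
  0 < L - 1/N - 2/N * (1 - (K-1)/N + K^2/(2*N^2)) * ((N/2-2)*L) - (K-1)*L/N
      - 2/N^2 * (N/2*L + (K-1)*L) - 2/3 * (N/2*K*L) * (8/N^3).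
Proof.
  pose proof N_ge_64.
  replace (L - 1/N - 2/N * (1 - (K-1)/N + K^2/(2*N^2)) * ((N/2-2)*L) - (K-1)*L/N
     - 2/N^2 * (N/2*L + (K-1)*L) - 2/3 * (N/2*K*L) * (8/N^3)) with
     (((3*L - 1)*N - L*(K^2/2 + 26*K/3 - 6))/N^2 + 2*K^2*L/N^3) by (field; lra).
  assert (0 <= 2*K^2*L/N^3) by (apply Rdiv_le_0_compat; nra).
  assert (0 < ((3*L - 1)*N - L*(K^2/2 + 26*K/3 - 6))/N^2).
  { apply Rdiv_lt_0_compat; [| nra].
    assert (K*(K - 6) >= 0) by (apply Rle_ge, Rmult_le_pos; nra).
    assert ((3*L-1)*(N - 16/9*K^2) >= 0) by (apply Rle_ge, Rmult_le_pos; nra).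
    assert (K^2*(L-0.693) >= 0) by (apply Rle_ge, Rmult_le_pos; nra).
    assert (K*(0.694 - L) >= 0) by (apply Rle_ge, Rmult_le_pos; nra).
    nra. }
  lra.
Qed.

(* The bound of [Phi_lower_bound] at [d = d_lbd k], [x = (1 - 1/N)/2], [y = x^(k-1)]. *)
Lemma ineq_Phi y : 0 < y -> y <= 2/N * (1 - (K-1)/N + K^2/(2*N^2)) -> y <= 2/N ->
  0 < (L - 1/N) + ((N/2-2)*(K-1)*L - 1) * ((1 - 1/N)*y + ((1 - 1/N)*y)^2/2)
      - ((N/2-2)*K*L - 1) * (y + y^2/2 + 2/3*y^3).
Proof.
  intros Hy Hyh Hy2. pose proof N_ge_64. pose proof ineq_Phi_main_terms as Hmain.
  assert (150 <= (N/2-2)*(K-1)) by nra.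
  set (dK := (N/2-2)*L). set (c := (N/2-2)*(K-1)*L - 1).
  assert (Hc0 : 0 <= c) by (unfold c; nra).
  assert (HdK : 0 <= dK <= N/2*L) by (unfold dK; nra).
  assert (Hcle : c <= N/2*(K-1)*L) by (unfold c; nra).
  replace ((N/2-2)*K*L - 1) with (c + dK) by (unfold c, dK; ring).
  replace ((L - 1/N) + c * ((1 - 1/N)*y + ((1 - 1/N)*y)^2/2) - (c + dK) * (y + y^2/2 + 2/3*y^3))
    with (L - 1/N - y * dK - y * c / N - y^2/2 * (dK + 2*c/N - c/N^2) - 2/3*(c+dK)*y^3)
    by (field; lra).
  assert (B1 : y * dK <= 2/N * (1 - (K-1)/N + K^2/(2*N^2)) * dK)
    by (apply Rmult_le_compat_r; lra).
  assert (B2 : y * c / N <= (K-1)*L/N).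
  { apply Rmult_le_compat_r; [apply Rlt_le, Rinv_0_lt_compat; lra |].
    replace ((K-1)*L) with (2/N * (N/2*(K-1)*L)) by (field; lra).
    apply Rmult_le_compat; lra. }
  assert (Hy2' : y^2 <= 4/N^2).
  { replace (4/N^2) with ((2/N)^2) by (field; lra). apply pow_incr; lra. }
  assert (Hy3' : y^3 <= 8/N^3).
  { replace (8/N^3) with ((2/N)^3) by (field; lra). apply pow_incr; lra. }
  assert (B3 : y^2/2 * (dK + 2*c/N - c/N^2) <= 2/N^2 * (N/2*L + (K-1)*L)).
  { assert (2*c/N <= (K-1)*L) by (apply Rle_div_l; nra).
    assert (c/N^2 <= c/N) by (apply Rmult_le_compat_l; [lra | apply Rinv_le_contravar; nra]).
    assert (0 <= c/N) by (apply Rdiv_le_0_compat; lra).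
    assert (0 <= c/N^2) by (apply Rdiv_le_0_compat; nra).
    apply Rmult_le_compat; nra. }
  assert (B4 : 2/3*(c+dK)*y^3 <= 2/3 * (N/2*K*L) * (8/N^3)).
  { apply Rmult_le_compat; [nra | nra | | lra].
    apply Rmult_le_compat_l; [lra |]. unfold c, dK. nra. }
  fold dK in Hmain. lra.
Qed.

End LargeKInequalities.

Lemma pow2_ge_sq k : (6 <= k)%nat -> 16/9 * INR k ^ 2 <= 2^k.
Proof.
  intros Hk. induction k as [|k IH]; [lia |].
  destruct (Nat.eq_dec k 5) as [-> | Hk5]; [simpl; lra |].
  specialize (IH ltac:(lia)).
  assert (6 <= INR k) by (replace 6 with (INR 6) by (simpl; lra); apply le_INR; lia).
  rewrite S_INR. simpl in *. nra.
Qed.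

Section LargeK.

Variable k : nat.
Hypothesis hk : (6 <= k)%nat.

Let N := 2^k.
Let K := INR k.
Let L := ln 2.

Let hk4 : (4 <= k)%nat.
Proof. lia. Qed.

Lemma K_ge_6 : 6 <= K.
Proof. replace 6 with (INR 6) by (simpl; lra). apply le_INR. exact hk. Qed.

Lemma N_ge_K_sq : 16/9 * K^2 <= N.
Proof. apply pow2_ge_sq, hk. Qed.

Lemma L_bounds : 0.693 < L < 0.694.
Proof. pose proof ln2_bounds. unfold L. lra. Qed.

Lemma INR_km1 : INR (k-1) = K - 1.
Proof. rewrite minus_INR by lia. reflexivity. Qed.

Lemma d_lbd_eq : d_lbd k = (N/2 - 2) * K * L.
Proof.
  unfold d_lbd. destruct (Nat.eqb_spec k 4) as [e | _]; [lia |].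
  rewrite (pow2_km1 k hk4). reflexivity.
Qed.

Lemma d_ubd_eq : d_ubd k = N/2 * K * L.
Proof. unfold d_ubd. rewrite (pow2_km1 k hk4). reflexivity. Qed.

Definition near_half (s : R) : R := 1/2 * (1 - s/N).

Lemma xlo_eq : xlo k = near_half 2.
Proof. unfold xlo, near_half, N. field. apply pow_nonzero. lra. Qed.

Lemma near_half_bounds s : 1 <= s <= 2 -> xlo k <= near_half s /\ 0 < near_half s < 1/2.
Proof.
  intros Hs. pose proof N_ge_K_sq. pose proof K_ge_6.
  assert (64 <= N) by nra.
  assert (0 < s/N <= 2/N) by (split; [apply Rdiv_lt_0_compat | apply Rmult_le_compat_r;
    [apply Rlt_le, Rinv_0_lt_compat |]]; lra).
  assert (2/N <= 1/32) by (apply Rle_div_l; lra).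
  rewrite xlo_eq. unfold near_half. lra.
Qed.

Lemma near_half_pow_lower s : 1 <= s <= 2 -> 2/N * (1 - s*(K-1)/N) <= near_half s ^ (k-1).
Proof.
  intros Hs. pose proof N_ge_K_sq. pose proof K_ge_6. assert (64 <= N) by nra.
  unfold near_half. rewrite Rpow_mult_distr, (half_pow_km1 k hk4). fold N.
  apply Rmult_le_compat_l; [apply Rlt_le, Rdiv_lt_0_compat; lra |].
  pose proof (pow_1m_lower (s/N) (k-1)) as Hlow. rewrite INR_km1 in Hlow.
  replace (s*(K-1)/N) with ((K-1) * (s/N)) by (field; lra).
  apply Hlow. split; [apply Rlt_le, Rdiv_lt_0_compat | apply Rle_div_l]; lra.
Qed.

Lemma near_half_pow_upper :
  near_half 1 ^ (k-1) <= 2/N * (1 - (K-1)/N + K^2/(2*N^2)) /\ near_half 1 ^ (k-1) <= 2/N.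
Proof.
  pose proof N_ge_K_sq. pose proof K_ge_6. assert (64 <= N) by nra.
  assert (H01 : 0 <= 1/N <= 1) by (split; [apply Rlt_le, Rdiv_lt_0_compat | apply Rle_div_l]; lra).
  unfold near_half. rewrite Rpow_mult_distr, (half_pow_km1 k hk4). fold N.
  set (t := 1/N) in *.
  pose proof (pow_1m_upper t (k-1) H01) as Hup. rewrite INR_km1 in Hup.
  assert (Hsq : (K-1)*(K-1)*t^2/2 <= K^2/(2*N^2)).
  { replace ((K-1)*(K-1)*t^2/2) with ((K-1)^2/(2*N^2)) by (unfold t; field; lra).
    apply Rmult_le_compat_r; [apply Rlt_le, Rinv_0_lt_compat |]; nra. }
  assert (Hle1 : (1 - t)^(k-1) <= 1^(k-1)) by (apply pow_incr; lra). rewrite pow1 in Hle1.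
  replace ((K-1)/N) with ((K-1)*t) by (unfold t; field; lra).
  assert (0 <= 2/N) by (apply Rlt_le, Rdiv_lt_0_compat; lra).
  split; [apply Rmult_le_compat_l; lra | nra].
Qed.

Lemma d_lbd_gt_4 : 4 < d_lbd k.
Proof.
  rewrite d_lbd_eq. pose proof N_ge_K_sq. pose proof K_ge_6. pose proof L_bounds.
  assert (30 <= N/2 - 2) by nra. assert (180 <= (N/2 - 2) * K) by nra. nra.
Qed.

Lemma ln_near_half_ratio s : s = 1 \/ s = 2 ->
  ln ((1 - 2 * near_half s) / (1 - near_half s)) = (s - K) * L - ln (1 + s/N).
Proof.
  intros Hs. assert (1 <= s <= 2) by (destruct Hs; lra).
  pose proof N_ge_K_sq. pose proof K_ge_6. assert (64 <= N) by nra.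
  assert (0 < s/N) by (apply Rdiv_lt_0_compat; lra).
  replace ((1 - 2 * near_half s) / (1 - near_half s)) with (2*s / (N * (1 + s/N)))
    by (unfold near_half; field; lra).
  assert (Hln2s : ln (2*s) = s * L).
  { unfold L. destruct Hs as [-> | ->]; [rewrite Rmult_1_r | rewrite ln_mult by lra]; ring. }
  rewrite ln_div, Hln2s, ln_mult by nra.
  replace (ln N) with (K * L) by (unfold N, K, L; rewrite ln_pow by lra; reflexivity).
  ring.
Qed.

Lemma fp_gap_lbd_near_half_neg s : s = 1 \/ s = 2 -> fp_gap k (d_lbd k) (near_half s) < 0.
Proof.
  intros Hs. assert (Hs12 : 1 <= s <= 2) by (destruct Hs; lra).
  pose proof N_ge_K_sq. pose proof K_ge_6. pose proof L_bounds. pose proof d_lbd_gt_4.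
  assert (64 <= N) by nra.
  destruct (near_half_bounds s Hs12) as [_ Hx].
  pose proof (near_half_pow_lower s Hs12) as Hylow.
  pose proof (ineq_fp_gap K N L K_ge_6 N_ge_K_sq L_bounds s Hs12) as Hineq.
  rewrite <- d_lbd_eq in Hineq.
  pose proof (ln_near_half_ratio s Hs) as Hrhs.
  assert (0 < s/N) by (apply Rdiv_lt_0_compat; lra).
  pose proof (ln_1p_le (s/N) ltac:(lra)).
  apply (fp_gap_neg_of_pow k hk4); [lra | lra |]. rewrite Hrhs.
  assert (0 <= (near_half s ^ (k-1))^2) by apply pow2_ge_0.
  nra.
Qed.

Lemma admissible_lbd : admissible k (d_lbd k).
Proof.
  pose proof d_lbd_gt_4. pose proof (near_half_pow_lower 2 ltac:(lra)) as Hy.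
  pose proof (ineq_admissible K N L K_ge_6 N_ge_K_sq L_bounds) as Hineq.
  rewrite <- d_lbd_eq, <- xlo_eq in *.
  split; [lra | split].
  - rewrite xlo_eq. apply fp_gap_lbd_near_half_neg. right. reflexivity.
  - assert (2/N * (1 - 2*(K-1)/N) * (d_lbd k - 4) <= xlo k ^ (k-1) * (d_lbd k - 4))
      by (apply Rmult_le_compat_r; lra).
    lra.
Qed.

Lemma Phi_lbd_near_half_pos : 0 < Phi k (d_lbd k) (near_half 1).
Proof.
  pose proof N_ge_K_sq. pose proof K_ge_6. pose proof L_bounds. pose proof d_lbd_gt_4.
  assert (64 <= N) by nra. assert (150 <= (N/2-2)*(K-1)) by nra.
  destruct (near_half_bounds 1 ltac:(lra)) as [_ Hx].
  destruct near_half_pow_upper as [Hyh Hy2].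
  assert (Ec : d_lbd k * (1 - / INR k - / d_lbd k) = (N/2-2)*(K-1)*L - 1).
  { rewrite d_lbd_eq. fold K. field. repeat split; apply Rgt_not_eq; nra. }
  assert (Hc : 0 <= (N/2-2)*(K-1)*L - 1) by nra.
  eapply Rlt_le_trans; [| apply (Phi_lower_bound k hk4); [lra | lra | rewrite Ec; lra]].
  rewrite Ec, (pow_pred_r (near_half 1) k) by lia.
  pose proof (pow_km1_small k hk4 (near_half 1) ltac:(lra)) as Hy.
  set (x := near_half 1) in *. set (y := x^(k-1)) in *.
  assert (Ex : 2 * (x * y) = (1 - 1/N) * y) by (unfold x, near_half; field; lra).
  assert (H1N : 0 < 1/N) by (apply Rdiv_lt_0_compat; lra).
  assert (Hl : L - 1/N <= - ln (1 - x)).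
  { replace (1 - x) with ((1 + 1/N)/2) by (unfold x, near_half; field; lra).
    rewrite ln_div by lra. pose proof (ln_1p_le (1/N) ltac:(lra)). fold L. lra. }
  pose proof (ineq_Phi K N L K_ge_6 N_ge_K_sq L_bounds y ltac:(lra) Hyh Hy2).
  rewrite Ex, d_lbd_eq. lra.
Qed.

Lemma dPhi_pos_near_half d x : d_lbd k <= d <= d_ubd k -> near_half 1 <= x <= 1/2 -> 0 < dPhi k d x.
Proof.
  intros Hd Hx. pose proof N_ge_K_sq. pose proof K_ge_6. pose proof L_bounds. pose proof d_lbd_gt_4.
  assert (64 <= N) by nra.
  destruct (near_half_bounds 1 ltac:(lra)) as [_ Hx1].
  eapply Rlt_le_trans; [| apply (dPhi_lower_bound k hk4 d x (near_half 1) (1/2)); lra].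
  assert (E : (1/2)^(k-2) = 4/N).
  { pose proof (half_pow_km1 k hk4) as E. fold N in E. rewrite (pow_pred_r (1/2) (k-1)) in E by lia.
    replace (k-1-1)%nat with (k-2)%nat in E by lia. lra. }
  cbv zeta. rewrite E, INR_km1.
  match goal with |- 0 < ?e =>
    replace e with (2*N/(N+1) - 4/(N-2) - 4*(d-1)*(K-1)/(N-2)^2)
      by (unfold near_half; field; repeat split; lra) end.
  apply (ineq_dPhi K N L K_ge_6 N_ge_K_sq L_bounds). rewrite d_ubd_eq in Hd. lra.
Qed.

Lemma sign_certificates_ge6 : sign_certificates k.
Proof.
  pose proof admissible_lbd as Hadm. pose proof d_lbd_gt_4.
  pose proof N_ge_K_sq. pose proof K_ge_6. pose proof L_bounds.
  destruct (near_half_bounds 1 ltac:(lra)) as [Hlo Hx1].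
  pose proof (fp_gap_lbd_near_half_neg 1 (or_introl eq_refl)) as HG.
  assert (Hlu : d_lbd k <= d_ubd k) by (rewrite d_lbd_eq, d_ubd_eq; nra).
  pose proof (fp_gap_antitone_in_d k hk4 (d_lbd k) (d_ubd k) (near_half 1) ltac:(lra) Hlu).
  split; [exact Hlu | split; [exact Hadm | split]].
  - exists (near_half 1). split; [| exact Phi_lbd_near_half_pos].
    split; [lra | split; [exact HG |]]. intros x Hx. apply dPhi_pos_near_half; lra.
  - exists (near_half 1).
    split; [lra | split; [lra |]]. intros x Hx. apply dPhi_pos_near_half; lra.
Qed.

End LargeK.

Lemma sign_certificates_hold k : (4 <= k)%nat -> sign_certificates k.
Proof.
  intros hk.
  destruct (Nat.eq_dec k 4) as [-> | n4]; [exact sign_certificates_4 |].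
  destruct (Nat.eq_dec k 5) as [-> | n5]; [exact sign_certificates_5 |].
  apply sign_certificates_ge6. lia.
Qed.

Theorem lemma3p2 (k : nat) (hk : (4 <= k)%nat) :
  continuous_on_closed (Phistar k) (d_lbd k) (d_ubd k) /\
  Phistar k (d_lbd k) > 0 /\
  Phistar k (d_ubd k) < 0.
Proof.
  destruct (sign_certificates_hold k hk) as (Hlu & Hadm & (x1 & Hb1 & Hpos) & (x2 & Hb2)).
  assert (Hadm_all : forall d, d_lbd k <= d <= d_ubd k -> admissible k d).
  { intros d Hd. apply (admissible_mono k hk (d_lbd k)); [exact Hadm | lra]. }
  split; [| split].
  - apply Phistar_continuous; assumption.
  - destruct (Phistar_bracket k hk (d_lbd k) x1 Hadm Hb1). lra.
  - destruct (Phistar_bracket k hk (d_ubd k) x2 (Hadm_all (d_ubd k) ltac:(lra)) Hb2).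
    pose proof (Phi_ubd_half_neg k hk). lra.
Qed.
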